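(* Let $\nu\ge1$, $d:\mathbb{Z}^\nu\to\mathbb{C}$ bounded, $J=J_0+D$ on $\ell^2(\mathbb{Z}^\nu)$, and $b\in\mathbb{R}$. Suppose that for some $j\in\{1,\dots,\nu\}$ one of the following holds: (i) $\sup\{k_j: k\in\mathbb{Z}^\nu,\ \Im(d(k))=b\}<\infty$; (ii) $\inf\{k_j: k\in\mathbb{Z}^\nu,\ \Im(d(k))=b\}>-\infty$. (Here $\sup\emptyset=-\infty$ and $\inf\emptyset=+\infty$.) Then $J$ has no boundary eigenvalue with imaginary part $b$.
   Context: $k_j$ denotes the $j$-th component of $k\in\mathbb{Z}^\nu$. $J_0$ is the discrete Laplacian on $\ell^2(\mathbb{Z}^\nu)$: $(J_0u)(k)=\sum_{l\in\mathbb{Z}^\nu:\|l\|_1=1}u(k+l)$, $\|l\|_1=\sum_j|l_j|$. $D$ is multiplication by $d$. The numerical range is $\operatorname{Num}(J)=\{\langle Ju,u\rangle:\|u\|=1\}$, and a boundary eigenvalue of $J$ is an eigenvalue of $J$ lying in the topological boundary of $\operatorname{Num}(J)$. *)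

From Stdlib Require Import Reals Lra Lia ZArith Arith List.
Open Scope R_scope.

Definition Cplx : Type := (R * R)%type.
Definition Re (z : Cplx) : R := fst z.
Definition Im (z : Cplx) : R := snd z.
Definition C0 : Cplx := (0, 0).
Definition Cadd (z w : Cplx) : Cplx := (Re z + Re w, Im z + Im w).
Definition Csub (z w : Cplx) : Cplx := (Re z - Re w, Im z - Im w).
Definition Cmul (z w : Cplx) : Cplx :=
  (Re z * Re w - Im z * Im w, Re z * Im w + Im z * Re w).
Definition Cconj (z : Cplx) : Cplx := (Re z, - Im z).
Definition Cnorm2 (z : Cplx) : R := Re z * Re z + Im z * Im z.
Definition Cmod (z : Cplx) : R := sqrt (Cnorm2 z).

(* A point of Z^nu is a function k : nat -> Z with k i = 0 for i >= nu;
   its j-th component (1-based j) is k (j-1). *)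
Definition Pt : Type := nat -> Z.
Definition lattice (nu : nat) (k : Pt) : Prop := forall i, (nu <= i)%nat -> k i = 0%Z.

Definition upd (k : Pt) (n : nat) (z : Z) : Pt :=
  fun i => if Nat.eqb i n then z else k i.

Definition shiftp (k : Pt) (i : nat) : Pt := upd k i (k i + 1)%Z.
Definition shiftm (k : Pt) (i : nat) : Pt := upd k i (k i - 1)%Z.

Definition zrange (N : nat) : list Z :=
  map (fun i => (Z.of_nat i - Z.of_nat N)%Z) (seq 0 (2 * N + 1)).

Fixpoint box (nu N : nat) : list Pt :=
  match nu with
  | O => (fun _ => 0%Z) :: nil
  | S n => flat_map (fun k => map (fun z => upd k n z) (zrange N)) (box n N)
  end.

Definition Csum (l : list Pt) (f : Pt -> Cplx) : Cplx :=
  fold_right Cadd C0 (map f l).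

Definition boxnorm2 (nu : nat) (u : Pt -> Cplx) (N : nat) : R :=
  Re (Csum (box nu N) (fun k => (Cnorm2 (u k), 0))).

(* u is in l^2(Z^nu): the (nonnegative) series sum |u(k)|^2 converges,
   i.e. its exhausting box partial sums are bounded *)
Definition l2 (nu : nat) (u : Pt -> Cplx) : Prop :=
  exists M : R, forall N, boxnorm2 nu u N <= M.

Definition norm2_is (nu : nat) (u : Pt -> Cplx) (r : R) : Prop :=
  Un_cv (boxnorm2 nu u) r.

(* <u, v> = z, the inner product sum_k u(k) conj(v(k)) (absolutely convergent
   for u, v in l^2), computed as the limit over exhausting boxes *)
Definition inner_is (nu : nat) (u v : Pt -> Cplx) (z : Cplx) : Prop :=
  Un_cv (fun N => Re (Csum (box nu N) (fun k => Cmul (u k) (Cconj (v k))))) (Re z) /\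
  Un_cv (fun N => Im (Csum (box nu N) (fun k => Cmul (u k) (Cconj (v k))))) (Im z).

Definition J0 (nu : nat) (u : Pt -> Cplx) (k : Pt) : Cplx :=
  fold_right Cadd C0
    (map (fun i => Cadd (u (shiftp k i)) (u (shiftm k i))) (seq 0 nu)).

Definition Japp (nu : nat) (d : Pt -> Cplx) (u : Pt -> Cplx) (k : Pt) : Cplx :=
  Cadd (J0 nu u k) (Cmul (d k) (u k)).

Definition NumRange (nu : nat) (d : Pt -> Cplx) (z : Cplx) : Prop :=
  exists u : Pt -> Cplx, l2 nu u /\ norm2_is nu u 1 /\ inner_is nu (Japp nu d u) u z.

Definition eigenvalue (nu : nat) (d : Pt -> Cplx) (lam : Cplx) : Prop :=
  exists u : Pt -> Cplx, l2 nu u /\ (exists k, lattice nu k /\ u k <> C0) /\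
    forall k, lattice nu k -> Japp nu d u k = Cmul lam (u k).

Definition boundary (S : Cplx -> Prop) (z : Cplx) : Prop :=
  forall eps, eps > 0 ->
    (exists w, S w /\ Cmod (Csub w z) < eps) /\
    (exists w, ~ S w /\ Cmod (Csub w z) < eps).

Definition boundary_eigenvalue (nu : nat) (d : Pt -> Cplx) (lam : Cplx) : Prop :=
  eigenvalue nu d lam /\ boundary (NumRange nu d) lam.

From Stdlib Require Import Reals ZArith Lra Lia Psatz List Classical FunctionalExtensionality.
Open Scope R_scope.

(* Let u be an eigenvector of J for an eigenvalue lam on the
   boundary of Num(J).
   (1) Im d = Im lam on the support of u.  If u(p) <> 0 and Im d(p) <> Im lam, the
       Rayleigh quotients of the test vectors P u + Y delta_p, with the normalisation
       P = 1 - Y conj(u p) / n where n = ||u||^2, equal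
           (lam n + A Y + G |Y|^2) / (n + w |Y|^2),   0 <= w <= 1,
       with A <> 0 a multiple of Im d(p) - Im lam.  An intermediate value argument
       solves "quotient = z" for every z close to lam, so lam is interior to Num(J).
   (2) Hence the support of u lies in {Im d = b}, where the j-th coordinate is
       bounded above (or below).  A support point k with extremal j-th coordinate
       exists, and the eigenvalue equation at k + e_j (resp. k - e_j), all of whose
       other neighbours lie outside the support, forces u(k) = 0.
   The file develops finite sums over the boxes [-N,N]^nu and the sifting property
   of Kronecker deltas, the box expansions of norm and numerical value of the test
   vectors, the planar solvability lemma, step (1), and finally step (2). *)

Ltac cplx_ring := unfold Cadd, Csub, Cmul, Cconj, Cnorm2, C0, Re, Im in *;
  apply injective_projections; simpl; ring.

Lemma Cnorm2_nonneg z : 0 <= Cnorm2 z.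
Proof. unfold Cnorm2. nra. Qed.

Definition gsum {A} (l : list A) (f : A -> Cplx) : Cplx := fold_right Cadd C0 (map f l).
Definition rsum {A} (l : list A) (f : A -> R) : R := fold_right Rplus 0 (map f l).

Lemma gsum_cons {A} x l (f : A -> Cplx) : gsum (x :: l) f = Cadd (f x) (gsum l f).
Proof. reflexivity. Qed.

Lemma gsum_app {A} l1 l2 (f : A -> Cplx) : gsum (l1 ++ l2) f = Cadd (gsum l1 f) (gsum l2 f).
Proof. induction l1 as [|x l1 IH]; simpl. - cplx_ring. - rewrite !gsum_cons, IH. cplx_ring. Qed.

Lemma gsum_map {A B} (g : A -> B) l f : gsum (map g l) f = gsum l (fun x => f (g x)).
Proof. unfold gsum. now rewrite map_map. Qed.

Lemma gsum_flat_map {A B} (F : A -> list B) l f :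
  gsum (flat_map F l) f = gsum l (fun x => gsum (F x) f).
Proof. induction l as [|x l IH]; simpl. - reflexivity. - now rewrite gsum_app, gsum_cons, IH. Qed.

Lemma gsum_ext_in {A} l (f g : A -> Cplx) :
  (forall x, In x l -> f x = g x) -> gsum l f = gsum l g.
Proof. intro H. unfold gsum. f_equal. now apply map_ext_in. Qed.

Lemma gsum_add {A} l (f g : A -> Cplx) :
  gsum l (fun x => Cadd (f x) (g x)) = Cadd (gsum l f) (gsum l g).
Proof. induction l as [|x l IH]. - simpl. cplx_ring. - rewrite !gsum_cons, IH. cplx_ring. Qed.

Lemma gsum_scal {A} l c (f : A -> Cplx) : gsum l (fun x => Cmul c (f x)) = Cmul c (gsum l f).
Proof. induction l as [|x l IH]. - simpl. cplx_ring. - rewrite !gsum_cons, IH. cplx_ring. Qed.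

Lemma gsum_mulr {A} l c (f : A -> Cplx) : gsum l (fun x => Cmul (f x) c) = Cmul (gsum l f) c.
Proof. induction l as [|x l IH]. - simpl. cplx_ring. - rewrite !gsum_cons, IH. cplx_ring. Qed.

Lemma gsum_conj {A} l (f : A -> Cplx) : gsum l (fun x => Cconj (f x)) = Cconj (gsum l f).
Proof. induction l as [|x l IH]. - simpl. cplx_ring. - rewrite !gsum_cons, IH. cplx_ring. Qed.

Lemma gsum_C0 {A} (l : list A) : gsum l (fun _ => C0) = C0.
Proof. induction l as [|x l IH]. - reflexivity. - rewrite gsum_cons, IH. cplx_ring. Qed.

Lemma gsum_swap {A B} (l : list A) (L : list B) g :
  gsum l (fun x => gsum L (fun i => g x i)) = gsum L (fun i => gsum l (fun x => g x i)).
Proof.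
  induction l as [|x l IH]; simpl.
  - now rewrite gsum_C0.
  - now rewrite gsum_cons, IH, <- gsum_add.
Qed.

Lemma gsum_real {A} l (f : A -> R) : gsum l (fun x => (f x, 0)) = (rsum l f, 0).
Proof.
  induction l as [|x l IH]. - reflexivity.
  - rewrite gsum_cons, IH. unfold rsum; simpl. cplx_ring.
Qed.

Lemma rsum_cons {A} x l (f : A -> R) : rsum (x :: l) f = f x + rsum l f.
Proof. reflexivity. Qed.

Lemma rsum_app {A} l1 l2 (f : A -> R) : rsum (l1 ++ l2) f = rsum l1 f + rsum l2 f.
Proof. induction l1 as [|x l1 IH]; unfold rsum in *; simpl. - ring. - rewrite IH. ring. Qed.

Lemma rsum_map {A B} (g : A -> B) l f : rsum (map g l) f = rsum l (fun x => f (g x)).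
Proof. unfold rsum. now rewrite map_map. Qed.

Lemma rsum_flat_map {A B} (F : A -> list B) l f :
  rsum (flat_map F l) f = rsum l (fun x => rsum (F x) f).
Proof. induction l as [|x l IH]; simpl. - reflexivity. - now rewrite rsum_app, IH. Qed.

Lemma rsum_le {A} l (f g : A -> R) : (forall x, f x <= g x) -> rsum l f <= rsum l g.
Proof. intro H. induction l as [|x l IH]; unfold rsum in *; simpl. - lra. - specialize (H x). lra. Qed.

Lemma rsum_nonneg {A} l (f : A -> R) : (forall x, 0 <= f x) -> 0 <= rsum l f.
Proof. intro H. induction l as [|x l IH]; unfold rsum in *; simpl. - lra. - specialize (H x). lra. Qed.

Lemma gsum_seq_delta (g : nat -> Cplx) m len s : (s <= m < s + len)%nat ->
  gsum (seq s len) (fun i => if Nat.eqb i m then g i else C0) = g m.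
Proof.
  revert s. induction len as [|len IH]; intros s Hs; [lia|].
  simpl. rewrite gsum_cons. destruct (Nat.eqb_spec s m) as [<-|Hne].
  - rewrite (gsum_ext_in _ _ (fun _ => C0)), gsum_C0; [cplx_ring|].
    intros x Hx. apply in_seq in Hx. destruct (Nat.eqb_spec x s); [lia|reflexivity].
  - rewrite IH by lia. cplx_ring.
Qed.

Fixpoint eqpt (n : nat) (k p : Pt) : bool :=
  match n with O => true | S n' => eqpt n' k p && Z.eqb (k n') (p n') end.

Lemma eqpt_spec n k p : eqpt n k p = true <-> forall i, (i < n)%nat -> k i = p i.
Proof.
  induction n as [|n IH]; simpl.
  - split; intros; [lia|auto].
  - rewrite Bool.andb_true_iff, IH, Z.eqb_eq. split.
    + intros [H1 H2] i Hi. destruct (Nat.eq_dec i n) as [->|]; auto. apply H1. lia.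
    + intros H. split; [intros; apply H|apply H]; lia.
Qed.

Lemma eqpt_refl n p : eqpt n p p = true.
Proof. now apply eqpt_spec. Qed.

Lemma eqpt_ext n k p k' p' :
  (forall i, (i < n)%nat -> k i = p i <-> k' i = p' i) -> eqpt n k p = eqpt n k' p'.
Proof.
  intro H. apply Bool.eq_true_iff_eq. rewrite !eqpt_spec.
  split; intros E i Hi; apply H; auto.
Qed.

Lemma upd_same k n z : upd k n z n = z.
Proof. unfold upd. now rewrite Nat.eqb_refl. Qed.

Lemma upd_other k n z i : i <> n -> upd k n z i = k i.
Proof. intro H. unfold upd. apply Nat.eqb_neq in H. now rewrite H. Qed.

Lemma eqpt_upd n k z p : eqpt (S n) (upd k n z) p = andb (eqpt n k p) (Z.eqb z (p n)).
Proof.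
  simpl. rewrite upd_same. f_equal. apply eqpt_ext. intros i Hi. rewrite upd_other by lia. tauto.
Qed.

Lemma box_lattice nu N k : In k (box nu N) -> lattice nu k.
Proof.
  revert k. induction nu as [|nu IH]; simpl; intros k Hk.
  - destruct Hk as [<-|[]]. intros i _. reflexivity.
  - apply in_flat_map in Hk. destruct Hk as [k' [Hk' Hin]].
    apply in_map_iff in Hin. destruct Hin as [z [<- _]].
    intros i Hi. rewrite upd_other by lia. apply (IH k'); auto; lia.
Qed.

Definition inbox nu (N : nat) (p : Pt) : Prop :=
  forall i, (i < nu)%nat -> (- Z.of_nat N <= p i <= Z.of_nat N)%Z.
Definition inbox1 nu (N : nat) (p : Pt) : Prop :=
  forall i, (i < nu)%nat -> (- Z.of_nat N + 1 <= p i <= Z.of_nat N - 1)%Z.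

Lemma inbox1_inbox nu N p : inbox1 nu N p -> inbox nu N p.
Proof. intros H i Hi. specialize (H i Hi). lia. Qed.

Lemma inbox1_eventually nu p : exists N0, forall N, (N0 <= N)%nat -> inbox1 nu N p.
Proof.
  assert (Hbound : forall n, exists M, forall i, (i < n)%nat -> (Z.abs (p i) <= Z.of_nat M)%Z).
  { induction n as [|n [M HM]]; [exists 0%nat; intros; lia|].
    exists (M + Z.to_nat (Z.abs (p n)))%nat. intros i Hi.
    destruct (Nat.eq_dec i n) as [->|]; [lia|]. specialize (HM i ltac:(lia)). lia. }
  destruct (Hbound nu) as [M HM]. exists (S M). intros N HN i Hi. specialize (HM i Hi). lia.
Qed.

Lemma zrange_delta N (g : Z -> Cplx) c : (- Z.of_nat N <= c <= Z.of_nat N)%Z ->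
  gsum (zrange N) (fun z => if Z.eqb z c then g z else C0) = g c.
Proof.
  intro Hc. unfold zrange. rewrite gsum_map.
  set (m := Z.to_nat (c + Z.of_nat N)).
  rewrite (gsum_ext_in _ _
    (fun i => if Nat.eqb i m then g (Z.of_nat i - Z.of_nat N)%Z else C0)).
  - rewrite (gsum_seq_delta (fun i => g (Z.of_nat i - Z.of_nat N)%Z)) by lia.
    f_equal. subst m. lia.
  - intros i _. destruct (Z.eqb_spec (Z.of_nat i - Z.of_nat N) c), (Nat.eqb_spec i m);
      auto; subst m; lia.
Qed.

Lemma box_delta nu N p f : lattice nu p -> inbox nu N p ->
  gsum (box nu N) (fun k => if eqpt nu k p then f k else C0) = f p.
Proof.
  revert p f. induction nu as [|nu IH]; intros p f Hp Hb.
  - simpl. replace p with (fun _ : nat => 0%Z) by (extensionality i; symmetry; apply Hp; lia).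
    rewrite gsum_cons. simpl. cplx_ring.
  - simpl box. rewrite gsum_flat_map.
    set (p' := upd p nu 0%Z).
    rewrite (gsum_ext_in _ _ (fun k => if eqpt nu k p' then f (upd k nu (p nu)) else C0)).
    + rewrite (IH p' (fun k => f (upd k nu (p nu)))).
      * f_equal. extensionality i. unfold p', upd. now destruct (Nat.eqb_spec i nu) as [->|].
      * intros i Hi. subst p'. unfold upd. destruct (Nat.eqb_spec i nu); auto. apply Hp. lia.
      * intros i Hi. subst p'. rewrite upd_other by lia. apply Hb. lia.
    + intros k _. rewrite gsum_map.
      rewrite <- (zrange_delta N (fun z => if eqpt nu k p' then f (upd k nu z) else C0) (p nu))
        by (apply Hb; lia).
      apply gsum_ext_in. intros z _. rewrite eqpt_upd.
      rewrite (eqpt_ext nu k p k p') by (intros i Hi; subst p'; rewrite upd_other by lia; tauto).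
      now destruct (eqpt nu k p'), (Z.eqb z (p nu)).
Qed.

Lemma zrange_mono N (h : Z -> R) : (forall z, 0 <= h z) ->
  rsum (zrange N) h <= rsum (zrange (S N)) h.
Proof.
  intro H. unfold zrange. rewrite !rsum_map.
  replace (2 * S N + 1)%nat with (S (S (2 * N + 1))) by lia.
  rewrite seq_S. change (seq 0 (S (2 * N + 1))) with (0%nat :: seq 1 (2 * N + 1)).
  rewrite <- seq_shift, rsum_app, !rsum_cons, rsum_map.
  replace (rsum (seq 0 (2 * N + 1)) (fun x => h (Z.of_nat (S x) - Z.of_nat (S N))%Z))
    with (rsum (seq 0 (2 * N + 1)) (fun x => h (Z.of_nat x - Z.of_nat N)%Z)).
  - pose proof (H (Z.of_nat 0 - Z.of_nat (S N))%Z).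
    pose proof (H (Z.of_nat (0 + S (2 * N + 1)) - Z.of_nat (S N))%Z). change (rsum nil ?f) with 0. lra.
  - unfold rsum. f_equal. apply map_ext. intro x. f_equal. lia.
Qed.

Lemma box_mono nu N (g : Pt -> R) : (forall k, 0 <= g k) ->
  rsum (box nu N) g <= rsum (box nu (S N)) g.
Proof.
  revert g. induction nu as [|nu IH]; intros g Hg; simpl box; [lra|].
  rewrite !rsum_flat_map.
  apply Rle_trans with (rsum (box nu N) (fun x => rsum (map (fun z => upd x nu z) (zrange (S N))) g)).
  - apply rsum_le. intro x. rewrite !rsum_map. now apply zrange_mono.
  - apply IH. intro k. now apply rsum_nonneg.
Qed.

Lemma boxnorm2_rsum nu u N : boxnorm2 nu u N = rsum (box nu N) (fun k => Cnorm2 (u k)).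
Proof.
  unfold boxnorm2, Csum. fold (gsum (box nu N) (fun k => (Cnorm2 (u k), 0))).
  now rewrite gsum_real.
Qed.

Lemma boxnorm2_growing nu u : Un_growing (boxnorm2 nu u).
Proof. intro N. rewrite !boxnorm2_rsum. apply box_mono. intro; apply Cnorm2_nonneg. Qed.

Lemma l2_cv nu u : l2 nu u -> exists n, Un_cv (boxnorm2 nu u) n.
Proof.
  intros [M HM]. apply Un_cv_crit; [apply boxnorm2_growing|].
  exists M. intros x [i ->]. apply HM.
Qed.

Lemma Cnorm2_le_limit nu u p n : lattice nu p -> Un_cv (boxnorm2 nu u) n -> Cnorm2 (u p) <= n.
Proof.
  intros Hp Hn. destruct (inbox1_eventually nu p) as [N HN].
  apply Rle_trans with (boxnorm2 nu u N).
  - rewrite boxnorm2_rsum.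
    pose proof (box_delta nu N p (fun k => (Cnorm2 (u k), 0)) Hp
                  (inbox1_inbox _ _ _ (HN N (le_n N)))) as E.
    rewrite (gsum_ext_in _ _ (fun k => (if eqpt nu k p then Cnorm2 (u k) else 0, 0))), gsum_real in E
      by (intros k _; now destruct (eqpt nu k p)).
    injection E as <-. apply rsum_le. intro k. destruct (eqpt nu k p); [lra|apply Cnorm2_nonneg].
  - now apply growing_ineq; [apply boxnorm2_growing|].
Qed.

Lemma cv_const c : Un_cv (fun _ => c) c.
Proof. intros eps He. exists 0%nat. intros. unfold Rdist. now rewrite Rminus_diag, Rabs_R0. Qed.

Lemma cv_eventually (a b : nat -> R) l N0 :
  (forall N, (N0 <= N)%nat -> a N = b N) -> Un_cv b l -> Un_cv a l.
Proof.
  intros H Hb eps He. destruct (Hb eps He) as [N1 HN1]. exists (max N0 N1). intros m Hm.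
  rewrite H by lia. apply HN1. lia.
Qed.

Lemma cv_affine (F : nat -> Cplx) (B : nat -> R) n K L N0 : Un_cv B n ->
  (forall N, (N0 <= N)%nat -> F N = Cadd (Cmul K (B N, 0)) L) ->
  Un_cv (fun N => Re (F N)) (Re (Cadd (Cmul K (n, 0)) L)) /\
  Un_cv (fun N => Im (F N)) (Im (Cadd (Cmul K (n, 0)) L)).
Proof.
  intros HB HF. unfold Cadd, Cmul, Re, Im in *; simpl in *. split.
  - apply (cv_eventually _ (fun N => fst K * B N + fst L) _ N0).
    + intros N HN. rewrite HF by auto. simpl. ring.
    + replace (fst K * n - snd K * 0 + fst L) with (fst K * n + fst L) by ring.
      apply CV_plus; [apply CV_mult; [apply cv_const|exact HB]|apply cv_const].
  - apply (cv_eventually _ (fun N => snd K * B N + snd L) _ N0).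
    + intros N HN. rewrite HF by auto. simpl. ring.
    + replace (fst K * 0 + snd K * n + snd L) with (snd K * n + snd L) by ring.
      apply CV_plus; [apply CV_mult; [apply cv_const|exact HB]|apply cv_const].
Qed.

Lemma shiftp_lattice nu k i : (i < nu)%nat -> lattice nu k -> lattice nu (shiftp k i).
Proof. intros Hi Hk j Hj. unfold shiftp. rewrite upd_other by lia. auto. Qed.

Lemma shiftm_lattice nu k i : (i < nu)%nat -> lattice nu k -> lattice nu (shiftm k i).
Proof. intros Hi Hk j Hj. unfold shiftm. rewrite upd_other by lia. auto. Qed.

Lemma shiftm_shiftp k i : shiftm (shiftp k i) i = k.
Proof.
  extensionality x. unfold shiftm, shiftp, upd.
  destruct (Nat.eqb_spec x i) as [->|]; rewrite ?Nat.eqb_refl; lia.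
Qed.

Lemma shiftp_shiftm k i : shiftp (shiftm k i) i = k.
Proof.
  extensionality x. unfold shiftm, shiftp, upd.
  destruct (Nat.eqb_spec x i) as [->|]; rewrite ?Nat.eqb_refl; lia.
Qed.

Lemma shiftp_same k i : shiftp k i i = (k i + 1)%Z.
Proof. apply upd_same. Qed.

Lemma shiftm_same k i : shiftm k i i = (k i - 1)%Z.
Proof. apply upd_same. Qed.

Lemma shift_other k i j : i <> j -> shiftp k i j = k j /\ shiftm k i j = k j.
Proof. intro H. split; apply upd_other; auto. Qed.

Lemma J0_gsum nu u k :
  J0 nu u k = gsum (seq 0 nu) (fun i => Cadd (u (shiftp k i)) (u (shiftm k i))).
Proof. reflexivity. Qed.

Definition delta nu (p : Pt) : Pt -> Cplx := fun k => if eqpt nu k p then (1, 0) else C0.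

Lemma Japp_linear nu d P Y f g k :
  Japp nu d (fun k => Cadd (Cmul P (f k)) (Cmul Y (g k))) k =
  Cadd (Cmul P (Japp nu d f k)) (Cmul Y (Japp nu d g k)).
Proof.
  unfold Japp. rewrite !J0_gsum.
  rewrite (gsum_ext_in _ _ (fun i => Cadd (Cmul P (Cadd (f (shiftp k i)) (f (shiftm k i))))
    (Cmul Y (Cadd (g (shiftp k i)) (g (shiftm k i)))))) by (intros; cplx_ring).
  rewrite gsum_add, !gsum_scal. cplx_ring.
Qed.

Lemma eqpt_shiftp nu k p i : eqpt nu (shiftp k i) p = eqpt nu k (shiftm p i).
Proof.
  apply eqpt_ext. intros j Hj. unfold shiftp, shiftm, upd.
  destruct (Nat.eqb_spec j i); subst; lia.
Qed.

Lemma eqpt_shiftm nu k p i : eqpt nu (shiftm k i) p = eqpt nu k (shiftp p i).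
Proof.
  apply eqpt_ext. intros j Hj. unfold shiftp, shiftm, upd.
  destruct (Nat.eqb_spec j i); subst; lia.
Qed.

Lemma eqpt_shift_self nu p i : (i < nu)%nat ->
  eqpt nu (shiftp p i) p = false /\ eqpt nu (shiftm p i) p = false.
Proof.
  intro Hi. split; apply Bool.not_true_iff_false; rewrite eqpt_spec; intro E;
    specialize (E i Hi); rewrite ?shiftp_same, ?shiftm_same in E; lia.
Qed.

Section Deltas.
Variables (nu N : nat) (p : Pt).
Hypothesis (Hp : lattice nu p) (Hbox : inbox nu N p).

Lemma box_inner_delta_r u :
  gsum (box nu N) (fun k => Cmul (u k) (Cconj (delta nu p k))) = u p.
Proof.
  rewrite <- (box_delta nu N p u) by auto. apply gsum_ext_in. intros k _.
  unfold delta. destruct (eqpt nu k p); cplx_ring.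
Qed.

Lemma box_inner_delta_l u :
  gsum (box nu N) (fun k => Cmul (delta nu p k) (Cconj (u k))) = Cconj (u p).
Proof.
  rewrite <- (box_delta nu N p (fun k => Cconj (u k))) by auto. apply gsum_ext_in. intros k _.
  unfold delta. destruct (eqpt nu k p); cplx_ring.
Qed.

Lemma box_inner_delta_delta :
  gsum (box nu N) (fun k => Cmul (delta nu p k) (Cconj (delta nu p k))) = (1, 0).
Proof. rewrite box_inner_delta_l. unfold delta. rewrite eqpt_refl. cplx_ring. Qed.

(* <J delta_p, delta_p> = d(p), since J0 delta_p vanishes at p. *)
Lemma box_inner_Jdelta_delta d :
  gsum (box nu N) (fun k => Cmul (Japp nu d (delta nu p) k) (Cconj (delta nu p k))) = d p.
Proof.
  rewrite box_inner_delta_r. unfold Japp. rewrite J0_gsum, (gsum_ext_in _ _ (fun _ => C0)), gsum_C0.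
  - unfold delta. rewrite eqpt_refl. cplx_ring.
  - intros i Hi. apply in_seq in Hi. unfold delta.
    destruct (eqpt_shift_self nu p i ltac:(lia)) as [-> ->]. cplx_ring.
Qed.
End Deltas.

(* <J delta_p, u> = conj((J0 u)(p)) + d(p) conj(u(p)): J0 is symmetric. *)
Lemma box_inner_Jdelta nu N p d u : lattice nu p -> inbox1 nu N p ->
  gsum (box nu N) (fun k => Cmul (Japp nu d (delta nu p) k) (Cconj (u k))) =
  Cadd (Cconj (J0 nu u p)) (Cmul (d p) (Cconj (u p))).
Proof.
  intros Hp Hb.
  assert (Hshift : forall i, (i < nu)%nat ->
    lattice nu (shiftp p i) /\ inbox nu N (shiftp p i) /\
    lattice nu (shiftm p i) /\ inbox nu N (shiftm p i)).
  { intros i Hi. split; [|split; [|split]]; auto using shiftp_lattice, shiftm_lattice;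
      intros j Hj; specialize (Hb j Hj); unfold shiftp, shiftm, upd;
      destruct (Nat.eqb_spec j i); subst; lia. }
  rewrite (gsum_ext_in _ _ (fun k => Cadd
     (gsum (seq 0 nu) (fun i => Cadd (if eqpt nu k (shiftm p i) then Cconj (u k) else C0)
                                     (if eqpt nu k (shiftp p i) then Cconj (u k) else C0)))
     (if eqpt nu k p then Cmul (d k) (Cconj (u k)) else C0))).
  - rewrite gsum_add, gsum_swap, (box_delta nu N p (fun k => Cmul (d k) (Cconj (u k))));
      auto using inbox1_inbox.
    f_equal. rewrite J0_gsum, <- gsum_conj. apply gsum_ext_in. intros i Hi. apply in_seq in Hi.
    destruct (Hshift i ltac:(lia)) as (Hl1 & Hb1 & Hl2 & Hb2).
    rewrite gsum_add, (box_delta nu N (shiftm p i) (fun k => Cconj (u k))),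
      (box_delta nu N (shiftp p i) (fun k => Cconj (u k))) by auto.
    cplx_ring.
  - intros k _. unfold Japp. rewrite J0_gsum.
    transitivity (Cadd
      (Cmul (gsum (seq 0 nu) (fun i => Cadd (delta nu p (shiftp k i)) (delta nu p (shiftm k i))))
            (Cconj (u k)))
      (Cmul (Cmul (d k) (delta nu p k)) (Cconj (u k)))); [cplx_ring|].
    f_equal.
    + rewrite <- gsum_mulr. apply gsum_ext_in. intros i _. unfold delta.
      rewrite eqpt_shiftp, eqpt_shiftm.
      destruct (eqpt nu k (shiftm p i)), (eqpt nu k (shiftp p i)); cplx_ring.
    + unfold delta. destruct (eqpt nu k p); cplx_ring.
Qed.

Definition test_vec nu u p (P Y : Cplx) : Pt -> Cplx :=
  fun k => Cadd (Cmul P (u k)) (Cmul Y (delta nu p k)).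

(* The box sums of |v|^2 and of (Jv) conj(v) for v = test_vec, when the box norm of u
   is B and u is an eigenvector of J for lam. *)
Definition test_norm (up P Y : Cplx) (B : R) : Cplx :=
  Cadd (Cmul (Cmul P (Cconj P)) (B, 0))
   (Cadd (Cmul (Cmul P (Cconj Y)) up)
   (Cadd (Cmul (Cmul Y (Cconj P)) (Cconj up)) (Cmul Y (Cconj Y)))).

Definition test_inner (lam up dp P Y : Cplx) (B : R) : Cplx :=
  Cadd (Cmul (Cmul (Cmul P (Cconj P)) lam) (B, 0))
   (Cadd (Cmul (Cmul (Cmul P lam) (Cconj Y)) up)
   (Cadd (Cmul (Cmul Y (Cconj P))
               (Cadd (Cconj (Csub (Cmul lam up) (Cmul dp up))) (Cmul dp (Cconj up))))
         (Cmul (Cmul Y (Cconj Y)) dp))).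

Section TestVectors.
Variables (nu : nat) (d u : Pt -> Cplx) (lam : Cplx) (p : Pt).
Hypothesis Heig : forall k, lattice nu k -> Japp nu d u k = Cmul lam (u k).
Hypothesis Hp : lattice nu p.

Lemma box_norm_sum N : gsum (box nu N) (fun k => (Cnorm2 (u k), 0)) = (boxnorm2 nu u N, 0).
Proof. rewrite gsum_real, boxnorm2_rsum. reflexivity. Qed.

Lemma test_norm_expand N P Y : inbox1 nu N p ->
  Csum (box nu N) (fun k => (Cnorm2 (test_vec nu u p P Y k), 0)) =
  test_norm (u p) P Y (boxnorm2 nu u N).
Proof.
  intro Hb. unfold Csum. fold (gsum (box nu N) (fun k => (Cnorm2 (test_vec nu u p P Y k), 0))).
  rewrite (gsum_ext_in _ _ (fun k =>
     Cadd (Cmul (Cmul P (Cconj P)) (Cnorm2 (u k), 0))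
    (Cadd (Cmul (Cmul P (Cconj Y)) (Cmul (u k) (Cconj (delta nu p k))))
    (Cadd (Cmul (Cmul Y (Cconj P)) (Cmul (delta nu p k) (Cconj (u k))))
          (Cmul (Cmul Y (Cconj Y)) (Cmul (delta nu p k) (Cconj (delta nu p k))))))))
    by (intros k _; unfold test_vec; cplx_ring).
  rewrite !gsum_add, !gsum_scal, box_norm_sum, box_inner_delta_r, box_inner_delta_l,
    box_inner_delta_delta; auto using inbox1_inbox.
  unfold test_norm. cplx_ring.
Qed.

Lemma test_inner_expand N P Y : inbox1 nu N p ->
  Csum (box nu N) (fun k => Cmul (Japp nu d (test_vec nu u p P Y) k) (Cconj (test_vec nu u p P Y k))) =
  test_inner lam (u p) (d p) P Y (boxnorm2 nu u N).
Proof.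
  intro Hb. unfold Csum.
  fold (gsum (box nu N) (fun k => Cmul (Japp nu d (test_vec nu u p P Y) k) (Cconj (test_vec nu u p P Y k)))).
  rewrite (gsum_ext_in _ _ (fun k =>
     Cadd (Cmul (Cmul (Cmul P (Cconj P)) lam) (Cnorm2 (u k), 0))
    (Cadd (Cmul (Cmul (Cmul P lam) (Cconj Y)) (Cmul (u k) (Cconj (delta nu p k))))
    (Cadd (Cmul (Cmul Y (Cconj P)) (Cmul (Japp nu d (delta nu p) k) (Cconj (u k))))
          (Cmul (Cmul Y (Cconj Y)) (Cmul (Japp nu d (delta nu p) k) (Cconj (delta nu p k))))))))
    by (intros k Hk; unfold test_vec; rewrite Japp_linear, Heig by (eapply box_lattice; eauto);
        cplx_ring).
  rewrite !gsum_add, !gsum_scal, box_norm_sum, box_inner_delta_r, box_inner_Jdelta,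
    box_inner_Jdelta_delta; auto using inbox1_inbox.
  assert (HJ0 : J0 nu u p = Csub (Cmul lam (u p)) (Cmul (d p) (u p))).
  { rewrite <- Heig by auto. unfold Japp. cplx_ring. }
  rewrite HJ0. reflexivity.
Qed.

Lemma test_value_in_range n P Y : Un_cv (boxnorm2 nu u) n ->
  Re (test_norm (u p) P Y n) = 1 -> NumRange nu d (test_inner lam (u p) (d p) P Y n).
Proof.
  intros Hn Hnorm. destruct (inbox1_eventually nu p) as [N0 HN0].
  exists (test_vec nu u p P Y).
  assert (Hcv : Un_cv (boxnorm2 nu (test_vec nu u p P Y)) 1).
  { rewrite <- Hnorm. unfold boxnorm2.
    exact (proj1 (cv_affine _ _ _ _ _ N0 Hn (fun N HN => test_norm_expand N P Y (HN0 N HN)))). }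
  split; [|split].
  - exists 1. intro N. apply growing_ineq; auto. apply boxnorm2_growing.
  - exact Hcv.
  - exact (cv_affine _ _ _ _ _ N0 Hn (fun N HN => test_inner_expand N P Y (HN0 N HN))).
Qed.
End TestVectors.

Lemma sq_nonneg (x : R) : 0 <= x * x.
Proof. apply Rle_0_sqr. Qed.

Lemma am_gm_bound (X q c s : R) : 0 <= X -> 0 <= q -> c * c <= X * q -> 2 * c * s <= X + q * s * s.
Proof.
  intros HX Hq Hc. pose proof (sq_nonneg s).
  destruct (Req_dec X 0) as [->|HX0].
  - assert (c = 0) by (apply Rsqr_0_uniq, Rle_antisym; [unfold Rsqr; lra|apply Rle_0_sqr]).
    subst. assert (0 <= q * (s * s)) by (apply Rmult_le_pos; lra). lra.
  - assert (E : X * (X + q * s * s - 2 * c * s) =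
                (X - c * s) * (X - c * s) + (X * q - c * c) * (s * s)) by ring.
    assert (0 <= X * (X + q * s * s - 2 * c * s)).
    { rewrite E. apply Rplus_le_le_0_compat; [apply sq_nonneg|apply Rmult_le_pos; lra]. }
    assert (0 <= X + q * s * s - 2 * c * s); [|lra].
    apply Rmult_le_reg_l with X; lra.
Qed.

(* The equation |c + Q s|^2 = a s has a real root s when |Q| |c| is small compared to a:
   the left side minus the right is >= 0 at s = 0 and <= 0 at s = 4|c|^2/a. *)
Lemma modulus_equation_root (c Q : Cplx) (a : R) : 0 < a ->
  16 * Cnorm2 Q * Cnorm2 c <= a * a ->
  exists s, Cnorm2 (Cadd c (Cmul Q (s, 0))) = a * s.
Proof.
  intros Ha Hsmall. destruct c as [c1 c2], Q as [Q1 Q2].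
  unfold Cnorm2, Cadd, Cmul, Re, Im in *; simpl in *.
  set (f := fun s => (c1 + (Q1 * s - Q2 * 0)) * (c1 + (Q1 * s - Q2 * 0)) +
                     (c2 + (Q1 * 0 + Q2 * s)) * (c2 + (Q1 * 0 + Q2 * s)) - a * s).
  set (X := c1 * c1 + c2 * c2). set (q := Q1 * Q1 + Q2 * Q2). set (c := c1 * Q1 + c2 * Q2).
  set (s1 := 4 * X / a).
  assert (HX : 0 <= X) by (pose proof (sq_nonneg c1); pose proof (sq_nonneg c2); unfold X; lra).
  assert (Hq : 0 <= q) by (pose proof (sq_nonneg Q1); pose proof (sq_nonneg Q2); unfold q; lra).
  assert (Hs1 : 0 <= s1) by (unfold s1, Rdiv; apply Rmult_le_pos; [lra|left; apply Rinv_0_lt_compat; lra]).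
  assert (Hcs : c * c <= X * q).
  { assert (E : X * q - c * c = (c1 * Q2 - c2 * Q1) * (c1 * Q2 - c2 * Q1)) by (unfold X, q, c; ring).
    pose proof (sq_nonneg (c1 * Q2 - c2 * Q1)). lra. }
  assert (Hf0 : 0 <= f 0) by (unfold f; pose proof (sq_nonneg c1); pose proof (sq_nonneg c2); nra).
  assert (Hf1 : f s1 <= 0).
  { assert (E : f s1 = X + 2 * c * s1 + q * s1 * s1 - 4 * X) by (unfold f, s1, X, c, q; field; lra).
    assert (Hqs : q * s1 * s1 <= X).
    { assert (E' : q * s1 * s1 = X * (16 * q * X) / (a * a)) by (unfold s1; field; lra).
      rewrite E'. apply Rmult_le_reg_r with (a * a); [nra|].
      unfold Rdiv. rewrite Rmult_assoc, Rinv_l by nra.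
      assert (16 * q * X <= a * a) by (unfold q, X; lra). nra. }
    pose proof (am_gm_bound X q c s1 HX Hq Hcs). lra. }
  destruct (IVT_cor f 0 s1) as [s [_ Hfs]].
  - unfold f. reg.
  - exact Hs1.
  - nra.
  - exists s. unfold f in Hfs. lra.
Qed.

(* Hence A Y = c + Q |Y|^2 is solvable for A <> 0 and |Q| |c| small: take Y = W / A with
   W = c + Q s, where s is a root of |c + Q s|^2 = |A|^2 s. *)
Lemma affine_modulus_solution (A c Q : Cplx) : 0 < Cnorm2 A ->
  16 * Cnorm2 Q * Cnorm2 c <= Cnorm2 A * Cnorm2 A ->
  exists Y, Cmul A Y = Cadd c (Cmul Q (Cnorm2 Y, 0)).
Proof.
  intros HA Hsmall.
  destruct (modulus_equation_root c Q (Cnorm2 A) HA Hsmall) as [s Hs].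
  set (W := Cadd c (Cmul Q (s, 0))) in Hs.
  set (a := Cnorm2 A) in *.
  exists (Cmul W (Re A / a, - Im A / a)).
  assert (HY : Cnorm2 (Cmul W (Re A / a, - Im A / a)) = s).
  { apply Rmult_eq_reg_r with a; [|lra].
    transitivity (Cnorm2 W * Cnorm2 A / a); [unfold Cnorm2, Cmul, Re, Im; simpl; field; lra|].
    fold a. rewrite Hs. field. lra. }
  rewrite HY. fold W. destruct A as [A1 A2], W as [W1 W2].
  unfold a, Cnorm2, Cmul, Re, Im in *; simpl in *.
  apply injective_projections; simpl; field; lra.
Qed.

Lemma perturbed_solution (n w : R) (A G lam : Cplx) : 0 < n -> 0 <= w <= 1 -> 0 < Cnorm2 A ->
  exists eps, 0 < eps /\ forall z, Cmod (Csub z lam) < eps -> exists Y,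
   Cadd (Cmul lam (n, 0)) (Cadd (Cmul A Y) (Cmul G (Cnorm2 Y, 0))) = Cmul z (n + w * Cnorm2 Y, 0).
Proof.
  intros Hn Hw HA.
  (* K bounds |z w - G|^2 for |z - lam| <= 1 *)
  set (K := 4 * Cnorm2 lam + 4 + 2 * Cnorm2 G).
  assert (HK : 0 < K) by (pose proof (Cnorm2_nonneg lam); pose proof (Cnorm2_nonneg G); unfold K; lra).
  set (T := Rmin 1 (Cnorm2 A * Cnorm2 A / (16 * K * (n * n)))).
  assert (HT : 0 < T).
  { apply Rmin_glb_lt; [lra|]. apply Rdiv_lt_0_compat; [nra|].
    apply Rmult_lt_0_compat; [lra|nra]. }
  exists (sqrt T). split; [now apply sqrt_lt_R0|]. intros z Hz.
  unfold Cmod in Hz. apply sqrt_lt_0_alt in Hz. unfold T in Hz. set (t := Csub z lam) in *.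
  assert (Ht1 : Cnorm2 t <= 1) by (pose proof (Rmin_l 1 (Cnorm2 A * Cnorm2 A / (16 * K * (n * n)))); lra).
  assert (Ht2 : Cnorm2 t * (16 * K * (n * n)) <= Cnorm2 A * Cnorm2 A).
  { pose proof (Rmin_r 1 (Cnorm2 A * Cnorm2 A / (16 * K * (n * n)))).
    assert (HD : 0 < 16 * K * (n * n)) by (apply Rmult_lt_0_compat; nra).
    apply Rle_trans with (Cnorm2 A * Cnorm2 A / (16 * K * (n * n)) * (16 * K * (n * n))).
    - apply Rmult_le_compat_r; lra.
    - right. field. lra. }
  set (Q := Csub (Cmul z (w, 0)) G).
  assert (HQ : Cnorm2 Q <= K).
  { assert (Hz2 : Cnorm2 z <= 2 * Cnorm2 lam + 2).
    { replace z with (Cadd t lam) by (unfold t; cplx_ring). destruct t as [t1 t2], lam as [l1 l2].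
      unfold Cnorm2, Cadd, Re, Im in *; simpl in *.
      pose proof (sq_nonneg (t1 - l1)); pose proof (sq_nonneg (t2 - l2)). nra. }
    unfold Q, K. destruct z as [z1 z2], G as [G1 G2]. unfold Cnorm2, Csub, Cmul, Re, Im in *; simpl in *.
    pose proof (sq_nonneg (z1 * w + G1)); pose proof (sq_nonneg (z2 * w + G2)).
    assert (0 <= z1 * z1 * (1 - w * w)) by (apply Rmult_le_pos; [apply sq_nonneg|nra]).
    assert (0 <= z2 * z2 * (1 - w * w)) by (apply Rmult_le_pos; [apply sq_nonneg|nra]).
    nra. }
  destruct (affine_modulus_solution A (Cmul t (n, 0)) Q HA) as [Y HY].
  - replace (Cnorm2 (Cmul t (n, 0))) with (Cnorm2 t * (n * n))
      by (unfold Cnorm2, Cmul, Re, Im; simpl; ring).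
    pose proof (Cnorm2_nonneg t). pose proof (Cnorm2_nonneg Q). nra.
  - exists Y. rewrite HY. unfold t, Q. cplx_ring.
Qed.

(* With P = r (1 - Y conj(u p) / n) and Y replaced by r Y, the cross terms between u and
   delta_p collapse: the numerical value and the norm become
   r^2 (lam n + A Y + G |Y|^2) and r^2 (n + (1 - |u p|^2 / n) |Y|^2). *)
Definition P0 (up Y : Cplx) (n : R) : Cplx := Csub (1, 0) (Cmul Y (Re up / n, - Im up / n)).
Definition Acoef (lam up dp : Cplx) : Cplx :=
  (2 * (Im dp - Im lam) * Im up, 2 * (Im dp - Im lam) * Re up).
Definition Gcoef (lam up dp : Cplx) (n : R) : Cplx :=
  Csub dp (Cmul (Re lam, 2 * Im dp - Im lam) (Cnorm2 up / n, 0)).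

Lemma test_inner_normalised lam up dp Y n r : n <> 0 ->
  test_inner lam up dp (Cmul (P0 up Y n) (r, 0)) (Cmul Y (r, 0)) n =
  Cmul (r * r, 0) (Cadd (Cmul lam (n, 0))
    (Cadd (Cmul (Acoef lam up dp) Y) (Cmul (Gcoef lam up dp n) (Cnorm2 Y, 0)))).
Proof.
  intro Hn. destruct lam as [l1 l2], up as [a1 a2], dp as [e1 e2], Y as [y1 y2].
  unfold test_inner, P0, Acoef, Gcoef, Cadd, Csub, Cmul, Cconj, Cnorm2, Re, Im; simpl.
  apply injective_projections; simpl; field; auto.
Qed.

Lemma test_norm_normalised up Y n r : n <> 0 ->
  Re (test_norm up (Cmul (P0 up Y n) (r, 0)) (Cmul Y (r, 0)) n) =
  r * r * (n + (1 - Cnorm2 up / n) * Cnorm2 Y).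
Proof.
  intro Hn. destruct up as [a1 a2], Y as [y1 y2].
  unfold test_norm, P0, Cadd, Csub, Cmul, Cconj, Cnorm2, Re, Im; simpl. field; auto.
Qed.

Lemma numerical_range_neighbourhood nu d u lam p n :
  (forall k, lattice nu k -> Japp nu d u k = Cmul lam (u k)) ->
  lattice nu p -> Un_cv (boxnorm2 nu u) n -> u p <> C0 -> Im (d p) <> Im lam ->
  exists eps, 0 < eps /\ forall z, Cmod (Csub z lam) < eps -> NumRange nu d z.
Proof.
  intros Heig Hp Hn Hu Hd.
  set (mu := Cnorm2 (u p)).
  assert (Hmu : 0 < mu).
  { unfold mu, Cnorm2. destruct (u p) as [a1 a2] eqn:Eu; unfold Re, Im; simpl.
    pose proof (sq_nonneg a1); pose proof (sq_nonneg a2).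
    destruct (Req_dec a1 0) as [->|], (Req_dec a2 0) as [->|]; [now exfalso; apply Hu|nra..]. }
  assert (Hmun : mu <= n) by (apply Cnorm2_le_limit with nu; auto).
  set (w := 1 - mu / n).
  assert (Hw : 0 <= w <= 1).
  { assert (0 < mu / n <= 1); [|unfold w; lra].
    split; [apply Rdiv_lt_0_compat; lra|]. apply Rmult_le_reg_r with n; [lra|].
    unfold Rdiv. rewrite Rmult_assoc, Rinv_l by lra. lra. }
  assert (HA : 0 < Cnorm2 (Acoef lam (u p) (d p))).
  { replace (Cnorm2 (Acoef lam (u p) (d p))) with (4 * ((Im (d p) - Im lam) * (Im (d p) - Im lam)) * mu)
      by (unfold Acoef, mu, Cnorm2, Re, Im; simpl; ring).
    apply Rmult_lt_0_compat; [|lra]. assert (Im (d p) - Im lam <> 0) by lra.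
    pose proof (Rsqr_pos_lt _ H). unfold Rsqr in *. lra. }
  destruct (perturbed_solution n w _ (Gcoef lam (u p) (d p) n) lam ltac:(lra) Hw HA) as [eps [Heps Hsol]].
  exists eps. split; [exact Heps|]. intros z Hz. destruct (Hsol z Hz) as [Y HY].
  (* normalise the test vector: r^2 (n + w |Y|^2) = 1 *)
  set (D := n + w * Cnorm2 Y).
  assert (HD : 0 < D) by (pose proof (Cnorm2_nonneg Y); unfold D; nra).
  set (r := / sqrt D).
  assert (Hr : r * r * D = 1) by (unfold r; rewrite <- Rinv_mult, sqrt_sqrt by lra; field; lra).
  replace z with (test_inner lam (u p) (d p) (Cmul (P0 (u p) Y n) (r, 0)) (Cmul Y (r, 0)) n).
  - apply test_value_in_range; auto. rewrite test_norm_normalised by lra. exact Hr.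
  - rewrite test_inner_normalised, HY by lra. fold D.
    transitivity (Cmul z (r * r * D, 0)); [cplx_ring|]. rewrite Hr. cplx_ring.
Qed.

Lemma support_in_level_set nu d lam u p :
  l2 nu u -> (forall k, lattice nu k -> Japp nu d u k = Cmul lam (u k)) ->
  boundary (NumRange nu d) lam -> lattice nu p -> u p <> C0 -> Im (d p) = Im lam.
Proof.
  intros Hl2 Heig Hbd Hp Hu.
  destruct (Req_dec (Im (d p)) (Im lam)) as [E|Hne]; [exact E|exfalso].
  destruct (l2_cv nu u Hl2) as [n Hn].
  destruct (numerical_range_neighbourhood nu d u lam p n Heig Hp Hn Hu Hne) as [eps [Heps Hin]].
  destruct (Hbd eps Heps) as [_ [z [Hz Hzlam]]].
  exact (Hz (Hin z Hzlam)).
Qed.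

Lemma Z_max_exists (Q : Z -> Prop) (M m0 : Z) : Q m0 -> (forall m, Q m -> (m <= M)%Z) ->
  exists m, Q m /\ forall m', Q m' -> (m' <= m)%Z.
Proof.
  intros Hm0 HM.
  enough (H : forall t m, (Z.to_nat (M - m) <= t)%nat -> Q m ->
                exists m', Q m' /\ forall m'', Q m'' -> (m'' <= m')%Z) by (exact (H _ m0 (le_n _) Hm0)).
  induction t as [|t IH]; intros m Ht Hm.
  - exists m. split; [exact Hm|]. intros m' Hm'. specialize (HM m' Hm'). lia.
  - destruct (classic (exists m', Q m' /\ (m < m')%Z)) as [[m' [Hm' Hlt]]|Hno].
    + apply (IH m'); auto. specialize (HM m' Hm'). lia.
    + exists m. split; [exact Hm|]. intros m' Hm'.
      destruct (Z_le_gt_dec m' m); [assumption|]. exfalso. apply Hno. exists m'. split; auto; lia.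
Qed.

Lemma lonely_neighbours nu d lam u k jj : (jj < nu)%nat ->
  (forall k, lattice nu k -> Japp nu d u k = Cmul lam (u k)) ->
  lattice nu k -> u k = C0 ->
  (forall i, (i < nu)%nat -> i <> jj -> u (shiftp k i) = C0 /\ u (shiftm k i) = C0) ->
  Cadd (u (shiftp k jj)) (u (shiftm k jj)) = C0.
Proof.
  intros Hjj Heig Hk Huk Hoff.
  set (axis_sum := Cadd (u (shiftp k jj)) (u (shiftm k jj))).
  assert (HJ0 : J0 nu u k = axis_sum).
  { rewrite J0_gsum, (gsum_ext_in _ _ (fun i => if Nat.eqb i jj then axis_sum else C0)).
    - exact (gsum_seq_delta (fun _ => axis_sum) jj nu 0 ltac:(lia)).
    - intros i Hi. apply in_seq in Hi. destruct (Nat.eqb_spec i jj) as [->|Hne]; [reflexivity|].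
      destruct (Hoff i ltac:(lia) Hne) as [-> ->]. cplx_ring. }
  rewrite <- HJ0. pose proof (Heig k Hk) as E. unfold Japp in E. rewrite Huk in E.
  transitivity (Cadd (J0 nu u k) (Cmul (d k) C0)); [cplx_ring|]. rewrite E. cplx_ring.
Qed.

Section ExtremalPoints.
Variables (nu : nat) (d u : Pt -> Cplx) (lam : Cplx) (jj : nat).
Hypothesis Hjj : (jj < nu)%nat.
Hypothesis Heig : forall k, lattice nu k -> Japp nu d u k = Cmul lam (u k).

Lemma no_top_point k : lattice nu k ->
  (forall q, lattice nu q -> (k jj < q jj)%Z -> u q = C0) -> u k = C0.
Proof.
  intros Hk Hbeyond. set (k' := shiftp k jj).
  assert (Hk' : lattice nu k') by (apply shiftp_lattice; auto).
  assert (Hfar : forall q, lattice nu q -> (k' jj <= q jj)%Z -> u q = C0).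
  { intros q Hq Hle. apply Hbeyond; auto. unfold k' in Hle. rewrite shiftp_same in Hle. lia. }
  assert (Hoff : forall i, (i < nu)%nat -> i <> jj ->
                  u (shiftp k' i) = C0 /\ u (shiftm k' i) = C0).
  { intros i Hi Hne. destruct (shift_other k' i jj Hne) as [E1 E2].
    split; apply Hfar; auto using shiftp_lattice, shiftm_lattice; lia. }
  pose proof (lonely_neighbours nu d lam u k' jj Hjj Heig Hk' (Hfar k' Hk' (Z.le_refl _)) Hoff) as Hsum.
  rewrite (Hfar (shiftp k' jj)) in Hsum by (auto using shiftp_lattice; rewrite shiftp_same; lia).
  unfold k' in Hsum. rewrite shiftm_shiftp in Hsum. rewrite <- Hsum. cplx_ring.
Qed.

Lemma no_bottom_point k : lattice nu k ->
  (forall q, lattice nu q -> (q jj < k jj)%Z -> u q = C0) -> u k = C0.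
Proof.
  intros Hk Hbeyond. set (k' := shiftm k jj).
  assert (Hk' : lattice nu k') by (apply shiftm_lattice; auto).
  assert (Hfar : forall q, lattice nu q -> (q jj <= k' jj)%Z -> u q = C0).
  { intros q Hq Hle. apply Hbeyond; auto. unfold k' in Hle. rewrite shiftm_same in Hle. lia. }
  assert (Hoff : forall i, (i < nu)%nat -> i <> jj ->
                  u (shiftp k' i) = C0 /\ u (shiftm k' i) = C0).
  { intros i Hi Hne. destruct (shift_other k' i jj Hne) as [E1 E2].
    split; apply Hfar; auto using shiftp_lattice, shiftm_lattice; lia. }
  pose proof (lonely_neighbours nu d lam u k' jj Hjj Heig Hk' (Hfar k' Hk' (Z.le_refl _)) Hoff) as Hsum.
  rewrite (Hfar (shiftm k' jj)) in Hsum by (auto using shiftm_lattice; rewrite shiftm_same; lia).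
  unfold k' in Hsum. rewrite shiftp_shiftm in Hsum. rewrite <- Hsum. cplx_ring.
Qed.
End ExtremalPoints.

Lemma support_top_point nu (u : Pt -> Cplx) jj k0 M : lattice nu k0 -> u k0 <> C0 ->
  (forall k, lattice nu k -> u k <> C0 -> (k jj <= M)%Z) ->
  exists k, lattice nu k /\ u k <> C0 /\ forall q, lattice nu q -> (k jj < q jj)%Z -> u q = C0.
Proof.
  intros Hk0 Hu0 HM.
  destruct (Z_max_exists (fun x => exists k, lattice nu k /\ u k <> C0 /\ k jj = x) M (k0 jj))
    as [x [[k [Hk [Huk <-]]] Hmax]].
  - now exists k0.
  - intros x [k [Hk [Huk <-]]]. auto.
  - exists k. repeat split; auto. intros q Hq Hlt. apply NNPP. intro Huq.
    specialize (Hmax (q jj) (ex_intro _ q (conj Hq (conj Huq eq_refl)))). lia.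
Qed.

Lemma support_bottom_point nu (u : Pt -> Cplx) jj k0 m : lattice nu k0 -> u k0 <> C0 ->
  (forall k, lattice nu k -> u k <> C0 -> (m <= k jj)%Z) ->
  exists k, lattice nu k /\ u k <> C0 /\ forall q, lattice nu q -> (q jj < k jj)%Z -> u q = C0.
Proof.
  intros Hk0 Hu0 Hm.
  destruct (Z_max_exists (fun x => exists k, lattice nu k /\ u k <> C0 /\ k jj = (- x)%Z)
              (- m) (- k0 jj)) as [x [[k [Hk [Huk Hkx]]] Hmax]].
  - exists k0. repeat split; auto. lia.
  - intros x [k [Hk [Huk Hkx]]]. specialize (Hm k Hk Huk). lia.
  - exists k. repeat split; auto. intros q Hq Hlt. apply NNPP. intro Huq.
    assert (Hq' : exists k, lattice nu k /\ u k <> C0 /\ k jj = (- - q jj)%Z)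
      by (exists q; repeat split; auto; lia).
    specialize (Hmax _ Hq'). lia.
Qed.

Theorem mainTheorem5 (nu : nat) (d : Pt -> Cplx) (b : R) :
  (1 <= nu)%nat ->
  (exists B : R, forall k, lattice nu k -> Cmod (d k) <= B) ->
  (exists j : nat, (1 <= j <= nu)%nat /\
     ((exists M : Z, forall k, lattice nu k -> Im (d k) = b -> (k (j - 1)%nat <= M)%Z) \/
      (exists m : Z, forall k, lattice nu k -> Im (d k) = b -> (m <= k (j - 1)%nat)%Z))) ->
  ~ (exists lam : Cplx, boundary_eigenvalue nu d lam /\ Im lam = b).
Proof.
  intros _ _ [j [Hj Hbounded]] [lam [[[u [Hl2 [[k0 [Hk0 Hu0]] Heig]]] Hbd] Hb]].
  assert (Hjj : (j - 1 < nu)%nat) by lia.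
  assert (Hlevel : forall k, lattice nu k -> u k <> C0 -> Im (d k) = b)
    by (intros k Hk Hu; rewrite <- Hb; eapply support_in_level_set; eauto).
  destruct Hbounded as [[M HM]|[m Hm]].
  - destruct (support_top_point nu u (j - 1) k0 M Hk0 Hu0) as [k [Hk [Huk Htop]]];
      [intros k Hk Hu; auto|].
    exact (Huk (no_top_point nu d u lam (j - 1) Hjj Heig k Hk Htop)).
  - destruct (support_bottom_point nu u (j - 1) k0 m Hk0 Hu0) as [k [Hk [Huk Hbot]]];
      [intros k Hk Hu; auto|].
    exact (Huk (no_bottom_point nu d u lam (j - 1) Hjj Heig k Hk Hbot)).
Qed.
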